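(* The only (one-sided) infinite binary words that contain no $3$-antipower as a factor are the words $0^\omega$, $(01)^\omega$, $110^\omega$, $1010^\omega$, $0^i10^\omega$ for $i \geq 0$, and their bitwise complements.
   Context: A $3$-antipower is a finite word $u_1u_2u_3$ with $|u_1|=|u_2|=|u_3|$ and $u_1,u_2,u_3$ pairwise distinct; a factor is a contiguous subword. For a finite word $x$, $x^\omega$ is the one-sided infinite word $xxx\cdots$. The bitwise complement exchanges $0$ and $1$. *)

(* Binary letters are booleans: 0 = false, 1 = true. *)
From mathcomp Require Import all_boot.
Set Implicit Arguments. Unset Strict Implicit. Unset Printing Implicit Defensive.

Definition infword := nat -> bool.

Definition is_3antipower (s : seq bool) : Prop :=
  exists u1 u2 u3 : seq bool,
    [/\ s = u1 ++ u2 ++ u3, size u1 = size u2, size u2 = size u3 &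
        [/\ u1 != u2, u1 != u3 & u2 != u3]].

Definition factor (w : infword) (i n : nat) : seq bool :=
  mkseq (fun k => w (i + k)) n.

Definition contains_3antipower (w : infword) : Prop :=
  exists i n, is_3antipower (factor w i n).

(* x^omega = x x x ... (meaningful for nonempty x). *)
Definition omega (x : seq bool) : infword :=
  fun k => nth false x (k %% size x).

Definition prepend (u : seq bool) (w : infword) : infword :=
  fun k => if k < size u then nth false u k else w (k - size u).

Definition compl (w : infword) : infword := fun k => ~~ w k.

Definition listed_word (w : infword) : Prop :=
  w =1 omega [:: false] \/
  w =1 omega [:: false; true] \/
  w =1 prepend [:: true; true] (omega [:: false]) \/
  w =1 prepend [:: true; false; true] (omega [:: false]) \/
  exists i : nat, w =1 prepend (nseq i false ++ [:: true]) (omega [:: false]).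

From mathcomp Require Import all_boot zify.
From Stdlib Require Import Classical.
Set Implicit Arguments. Unset Strict Implicit. Unset Printing Implicit Defensive.

(* Many short configurations force a 3-antipower, and so do two regular ones:
   ones at a and a+d (d >= 3) with no other one in (a, a+2d); and a one at a,
   no one in [a+m, a+D) and a one at a+D, where 2m < D < 3m.
   If w has finitely many ones, at least two, its last two ones must sit at
   positions 0 and 1 or 0 and 2, which leaves the listed words ending in 0^omega.
   Otherwise the gaps between consecutive ones cannot all be at least 3 (they
   would have to decrease strictly), so two ones at distance at most 2 occur;
   from there on every one is followed within two letters by another one, so
   w eventually avoids 00.  If the complement of w also has infinitely many
   ones, w eventually avoids 11 too, hence is eventually alternating; as
   x x followed by an alternating word of length 7 contains a 3-antipower, the
   alternation goes back to the first letter. *)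

Lemma size_factor w i n : size (factor w i n) = n.
Proof. by rewrite size_mkseq. Qed.

Lemma nth_factor w i n j : j < n -> nth false (factor w i n) j = w (i + j).
Proof. exact: nth_mkseq. Qed.

Lemma factorD w i m n : factor w i (m + n) = factor w i m ++ factor w (i + m) n.
Proof.
apply: (@eq_from_nth _ false) => [|j]; first by rewrite size_cat !size_factor.
rewrite size_factor => jmn; rewrite nth_cat size_factor nth_factor //.
case: ltnP => jm; first by rewrite nth_factor.
by rewrite nth_factor -?addnA ?subnKC //; lia.
Qed.

Lemma eq_factor w w' i n : w =1 w' -> factor w i n = factor w' i n.
Proof. by move=> ww'; apply: eq_mkseq => k; rewrite ww'. Qed.

Lemma factor_compl w i n : factor (compl w) i n = map negb (factor w i n).
Proof. by rewrite /factor /mkseq -map_comp. Qed.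

Lemma factor_eq w i i' m :
  (forall j, j < m -> w (i + j) = w (i' + j)) -> factor w i m = factor w i' m.
Proof.
move=> ww'; apply: (@eq_from_nth _ false); rewrite ?size_factor // => j jm.
by rewrite !nth_factor // ww'.
Qed.

Lemma factor_neq w i i' m j :
  j < m -> w (i + j) != w (i' + j) -> factor w i m != factor w i' m.
Proof.
move=> jm; apply: contra => /eqP ww'.
by rewrite -(nth_factor w i jm) -(nth_factor w i' jm) ww'.
Qed.

Definition antipower_at (w : infword) i m : bool :=
  [&& factor w i m != factor w (i + m) m,
      factor w i m != factor w (i + m + m) m &
      factor w (i + m) m != factor w (i + m + m) m].

Lemma contains_3antipowerP w :
  contains_3antipower w <-> exists i m, antipower_at w i m.
Proof.
split=> [[i [n [u1 [u2 [u3 [def_s s12 s23 [n12 n13 n23]]]]]]] | [i [m]]].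
  have def_n : n = size u1 + (size u1 + size u1).
    by rewrite -(size_factor w i n) def_s !size_cat -s23 -s12.
  exists i, (size u1); move: def_s; rewrite def_n !factorD => /eqP.
  rewrite eq_sym eqseq_cat ?size_factor // => /andP [/eqP e1].
  rewrite eqseq_cat ?size_factor // => /andP [/eqP e2 /eqP e3].
  by rewrite /antipower_at -e1 -e2 -e3 n12 n13 n23.
case/and3P=> n12 n13 n23; exists i, (m + (m + m)).
exists (factor w i m), (factor w (i + m) m), (factor w (i + m + m) m).
by split; rewrite ?size_factor // !factorD.
Qed.

Lemma contains_3antipower_eq w w' :
  w =1 w' -> contains_3antipower w -> contains_3antipower w'.
Proof.
move=> ww' /contains_3antipowerP [i [m anti]]; apply/contains_3antipowerP.
by exists i, m; move: anti; rewrite /antipower_at !(eq_factor _ _ ww').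
Qed.

Lemma contains_3antipower_compl w :
  contains_3antipower (compl w) <-> contains_3antipower w.
Proof.
by split=> /contains_3antipowerP [i [m anti]]; apply/contains_3antipowerP;
  exists i, m; move: anti;
  rewrite /antipower_at !factor_compl !(inj_eq (inj_map negb_inj)).
Qed.

Lemma contains_3antipower_of_offsets w i m j1 j2 j3 :
  j1 < m -> w (i + j1) != w (i + m + j1) ->
  j2 < m -> w (i + j2) != w (i + m + m + j2) ->
  j3 < m -> w (i + m + j3) != w (i + m + m + j3) -> contains_3antipower w.
Proof.
move=> j1m n12 j2m n13 j3m n23; apply/contains_3antipowerP; exists i, m.
apply/and3P; split;
  [exact: factor_neq j1m n12 | exact: factor_neq j2m n13 | exact: factor_neq j3m n23].
Qed.

Definition has_antipower (s : seq bool) : bool :=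
  has (fun i => has (fun m =>
         (i + m + m + m <= size s) && antipower_at (nth false s) i m)
       (iota 0 (size s)))
    (iota 0 (size s)).

Lemma factor_nth_factor w p n i m :
  i + m <= n -> factor (nth false (factor w p n)) i m = factor w (p + i) m.
Proof.
move=> imn; apply: (@eq_from_nth _ false); rewrite ?size_factor // => k km.
by rewrite !nth_factor ?addnA //; lia.
Qed.

Lemma has_antipower_factor w p n :
  has_antipower (factor w p n) -> contains_3antipower w.
Proof.
case/hasP=> i _ /hasP [m _ /andP []]; rewrite size_factor => imn anti.
apply/contains_3antipowerP; exists (p + i), m.
by move: anti; rewrite /antipower_at !factor_nth_factor -?addnA //; lia.
Qed.

Section Configurations.

Variable w : infword.

(* The blocks of length d-1 from a start with 1, 0, 0, and the last two differ
   at offset 1. *)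
Lemma antipower_long_gaps a d : 3 <= d -> w a -> w (a + d) ->
  (forall k, a < k < a + d -> w k = false) ->
  (forall k, a + d < k < a + d + d -> w k = false) -> contains_3antipower w.
Proof.
move=> d3 Wa Wad Z1 Z2.
apply: (@contains_3antipower_of_offsets w a (d - 1) 0 0 1); rewrite ?addn0; try lia.
- by rewrite Wa Z1 //; lia.
- by rewrite Wa Z2 //; lia.
- by rewrite (_ : a + (d - 1) + 1 = a + d) ?Wad ?Z2 //; lia.
Qed.

(* The blocks of length m from a start with 1, 0, 0, and the one at a+D lies in
   the third block, opposite a zero of the second. *)
Lemma antipower_spaced_ones a m D : m + m < D < m + m + m -> w a ->
  (forall k, a + m <= k < a + D -> w k = false) -> w (a + D) ->
  contains_3antipower w.
Proof.
move=> mD Wa Z WaD.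
apply: (@contains_3antipower_of_offsets w a m 0 0 (D - m - m)); rewrite ?addn0; try lia.
- by rewrite Wa Z //; lia.
- by rewrite Wa Z //; lia.
- by rewrite (_ : a + m + m + (D - m - m) = a + D) ?WaD ?Z //; lia.
Qed.

Lemma antipower_11001 a : w a -> w (a + 1) -> w (a + 2) = false ->
  w (a + 3) = false -> w (a + 4) -> contains_3antipower w.
Proof.
move=> h0 h1 h2 h3 h4; apply: (@has_antipower_factor w a 9).
rewrite /factor /mkseq /= addn0 h0 h1 h2 h3 h4.
by do 4 case: (w _); vm_compute.
Qed.

Lemma antipower_1100001 a : w a -> w (a + 1) -> w (a + 2) = false ->
  w (a + 3) = false -> w (a + 4) = false -> w (a + 5) = false -> w (a + 6) ->
  contains_3antipower w.
Proof.
move=> h0 h1 h2 h3 h4 h5 h6; apply: (@has_antipower_factor w a 7).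
by rewrite /factor /mkseq /= addn0 h0 h1 h2 h3 h4 h5 h6; vm_compute.
Qed.

Lemma antipower_101001 a : w a -> w (a + 1) = false -> w (a + 2) ->
  w (a + 3) = false -> w (a + 4) = false -> w (a + 5) -> contains_3antipower w.
Proof.
move=> h0 h1 h2 h3 h4 h5; apply: (@has_antipower_factor w a 7).
rewrite /factor /mkseq /= addn0 h0 h1 h2 h3 h4 h5.
by case: (w _); vm_compute.
Qed.

Lemma antipower_1010001 a : w a -> w (a + 1) = false -> w (a + 2) ->
  w (a + 3) = false -> w (a + 4) = false -> w (a + 5) = false -> w (a + 6) ->
  contains_3antipower w.
Proof.
move=> h0 h1 h2 h3 h4 h5 h6; apply: (@has_antipower_factor w a 12).
rewrite /factor /mkseq /= addn0 h0 h1 h2 h3 h4 h5 h6.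
by do 5 case: (w _); vm_compute.
Qed.

Lemma antipower_x11000 p : w (p + 1) -> w (p + 2) ->
  w (p + 3) = false -> w (p + 4) = false -> w (p + 5) = false ->
  contains_3antipower w.
Proof.
move=> h1 h2 h3 h4 h5; apply: (@has_antipower_factor w p 6).
rewrite /factor /mkseq /= addn0 h1 h2 h3 h4 h5.
by case: (w _); vm_compute.
Qed.

Lemma antipower_x10100000 p : w (p + 1) -> w (p + 2) = false -> w (p + 3) ->
  w (p + 4) = false -> w (p + 5) = false -> w (p + 6) = false ->
  w (p + 7) = false -> w (p + 8) = false -> contains_3antipower w.
Proof.
move=> h1 h2 h3 h4 h5 h6 h7 h8; apply: (@has_antipower_factor w p 9).
rewrite /factor /mkseq /= addn0 h1 h2 h3 h4 h5 h6 h7 h8.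
by case: (w _); vm_compute.
Qed.

Lemma antipower_xx_alternating p :
  (forall k, w (p + 1 + k) = odd k (+) w p) -> contains_3antipower w.
Proof.
move=> alt; apply: (@has_antipower_factor w p 9).
have -> : factor w p 9 = mkseq (fun k => if k is k'.+1 then odd k' (+) w p else w p) 9.
  apply: eq_mkseq => -[|k]; first by rewrite addn0.
  by rewrite -alt addn1 addSn -addnS.
by case: (w p); vm_compute.
Qed.

End Configurations.

Definition infinitely_many_ones (w : infword) := forall N, exists2 k, N <= k & w k.

Definition eventually_zero (w : infword) := exists N, forall k, N <= k -> w k = false.

Lemma not_eventually_zero_ones w : ~ eventually_zero w -> infinitely_many_ones w.
Proof.
move=> not_zero N; apply: NNPP => none; apply: not_zero; exists N => k Nk.
by apply: negbTE; apply/negP => Wk; apply: none; exists k.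
Qed.

Lemma next_one (w : infword) b : infinitely_many_ones w ->
  exists d, [/\ 0 < d, w (b + d) & forall k, b < k < b + d -> w k = false].
Proof.
move=> /(_ b.+1) [k bk Wk].
have ex : exists j, w (b.+1 + j) by exists (k - b.+1); rewrite subnKC.
case: (ex_minnP ex) => j Wj jmin; exists j.+1; split; rewrite ?addnS -?addSn //.
move=> i /andP [bi ibj]; apply: negbTE; apply/negP => Wi.
by have := jmin (i - b.+1); rewrite subnKC // => /(_ Wi); lia.
Qed.

Section InfinitelyManyOnes.

Variable w : infword.
Hypothesis ones : infinitely_many_ones w.

Lemma antipower_1100 a : w a -> w (a + 1) -> w (a + 2) = false ->
  w (a + 3) = false -> contains_3antipower w.
Proof.
move=> h0 h1 h2 h3; have [d [d_gt0 Wd Z]] := next_one (a + 1) ones.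
have z k : a + 2 <= k < a + 1 + d -> w k = false by move=> ?; apply: Z; lia.
have d3 : 3 <= d.
  by case: d d_gt0 Wd {Z z} => [|[|[|d]]] // _; rewrite -addnA ?h2 ?h3.
have [d_eq3|d_neq3] := eqVneq d 3.
  by subst d; rewrite -addnA in Wd; exact: antipower_11001 h0 h1 h2 h3 Wd.
have [d_eq5|d_neq5] := eqVneq d 5.
  subst d; rewrite -addnA in Wd.
  by apply: (antipower_1100001 h0 h1 h2 h3 _ _ Wd); apply: z; lia.
(* 2m < d+1 < 3m has the solution m = d/2 unless d is 3 or 5. *)
apply: (@antipower_spaced_ones w a (d %/ 2) (d + 1)) => //; first lia.
  by move=> k ?; apply: z; lia.
by rewrite addnA addnAC.
Qed.

Lemma antipower_10100 a : w a -> w (a + 1) = false -> w (a + 2) ->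
  w (a + 3) = false -> w (a + 4) = false -> contains_3antipower w.
Proof.
move=> h0 h1 h2 h3 h4; have [d [d_gt0 Wd Z]] := next_one (a + 2) ones.
have z k : a + 3 <= k < a + 2 + d -> w k = false by move=> ?; apply: Z; lia.
have d3 : 3 <= d.
  by case: d d_gt0 Wd {Z z} => [|[|[|d]]] // _; rewrite -addnA ?h3 ?h4.
have [d_eq3|d_neq3] := eqVneq d 3.
  by subst d; rewrite -addnA in Wd; exact: antipower_101001 h0 h1 h2 h3 h4 Wd.
have [d_eq4|d_neq4] := eqVneq d 4.
  subst d; rewrite -addnA in Wd.
  by apply: (antipower_1010001 h0 h1 h2 h3 h4 _ Wd); apply: z; lia.
(* 2m < d+2 < 3m has the solution m = (d+1)/2 unless d is 3 or 4. *)
apply: (@antipower_spaced_ones w a ((d + 1) %/ 2) (d + 2)) => //; first lia.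
  by move=> k ?; apply: z; lia.
by rewrite addnA addnAC.
Qed.

Hypothesis avoid : ~ contains_3antipower w.

Lemma close_ones : exists a, w a && (w a.+1 || w a.+2).
Proof.
apply: NNPP => none.
have isolated a : w a -> w a.+1 = false /\ w a.+2 = false.
  move=> Wa; split; apply: negbTE; apply/negP => W; apply: none.
    by exists a; rewrite Wa W.
  by exists a; rewrite Wa W orbT.
suff no_gap d a : w a -> 0 < d -> w (a + d) ->
    (forall k, a < k < a + d -> w k = false) -> False.
  have [a _ Wa] := ones 0; have [d [d_gt0 Wd Z]] := next_one a ones.
  exact: no_gap Wa d_gt0 Wd Z.
elim/ltn_ind: d a => d IH a Wa d_gt0 Wd Z.
have d3 : 3 <= d.
  have [W1 W2] := isolated a Wa.
  by case: d {IH Z} d_gt0 Wd => [|[|[|d]]] // _; rewrite ?addn1 ?addn2 ?W1 ?W2.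
have [d' [d'_gt0 Wd' Z']] := next_one (a + d) ones.
case: (ltnP d' d) => [lt_d'd | le_dd']; first exact: IH lt_d'd _ Wd d'_gt0 Wd' Z'.
by apply: avoid; apply: (antipower_long_gaps d3 Wa Wd Z) => k ?; apply: Z'; lia.
Qed.

Lemma eventually_no_00 : exists P, forall p, P <= p -> w p || w p.+1.
Proof.
have [a close_a] := close_ones.
pose close p := w p && (w p.+1 || w p.+2).
have step p : close p -> close p.+1 || close p.+2.
  rewrite /close => /andP [Wp]; case W1: (w p.+1) => /=.
  - case: (boolP (w p.+2 || w p.+3)) => // /norP [/negbTE W2 /negbTE W3].
    by case: avoid; apply: (antipower_1100 (a := p)); rewrite ?addn1 ?addn2 ?addn3.
  - move=> W2; rewrite W2; case: (boolP (w p.+3 || w p.+4)) => //.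
    move=> /norP [/negbTE W3 /negbTE W4]; case: avoid.
    by apply: (antipower_10100 (a := p)); rewrite ?addn1 ?addn2 ?addn3 ?addn4.
have inv k : close (a + k) || close (a + k).+1.
  elim: k => [|k]; first by rewrite addn0 /close close_a.
  by rewrite addnS => /orP [/step | ->].
exists a => p ap; have := inv (p - a); rewrite subnKC //.
by case/orP => /andP [-> _]; rewrite ?orbT.
Qed.

End InfinitelyManyOnes.

Definition alternating_from (w : infword) P := forall p, P <= p -> w p.+1 = ~~ w p.

Lemma alternating_fromE w P :
  alternating_from w P -> forall k, w (P + k) = odd k (+) w P.
Proof.
move=> alt; elim=> [|k IH]; first by rewrite addn0.
by rewrite addnS alt ?leq_addr // IH addNb.
Qed.

Lemma alternating_everywhere w P : ~ contains_3antipower w ->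
  alternating_from w P -> alternating_from w 0.
Proof.
move=> avoid; elim: P => // P IH alt; apply: IH => p.
rewrite leq_eqVlt => /orP [/eqP <- | /alt //].
have [//|ne] := eqVneq (w P.+1) (~~ w P).
have same : w P.+1 = w P by case: (w P) (w P.+1) ne => [] [].
case: avoid; apply: (antipower_xx_alternating (p := P)) => k.
by rewrite addn1 -same; exact: alternating_fromE.
Qed.

Lemma alternating_of_avoid w : ~ contains_3antipower w ->
  infinitely_many_ones w -> infinitely_many_ones (compl w) -> alternating_from w 0.
Proof.
move=> avoid ones zeros.
have avoid' : ~ contains_3antipower (compl w) by move/contains_3antipower_compl.
have [P no00] := eventually_no_00 ones avoid.
have [Q no11] := eventually_no_00 zeros avoid'.
apply: (@alternating_everywhere w (P + Q)) => // p PQp.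
have [Pp Qp] : P <= p /\ Q <= p by lia.
by move: (no00 p Pp) (no11 p Qp); rewrite /compl; case: (w p) (w p.+1) => [] [].
Qed.

Lemma last_one_below (w : infword) n : (exists2 k, k < n & w k) ->
  exists a, [/\ a < n, w a & forall k, a < k < n -> w k = false].
Proof.
case=> k kn Wk; have ex : exists i, (i < n) && w i by exists k; rewrite kn.
have ub i : (i < n) && w i -> i <= n by case/andP => /ltnW.
case: (ex_maxnP ex ub) => a /andP [an Wa] amax.
exists a; split=> // i /andP [ai i_n].
by apply: negbTE; apply/negP => Wi; have := amax i; rewrite i_n Wi => /(_ isT); lia.
Qed.

Lemma last_two_ones (w : infword) a b :
  ~ contains_3antipower w -> a < b -> w a -> w b ->
  (forall k, a < k -> k != b -> w k = false) -> a = 0 /\ (b = 1 \/ b = 2).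
Proof.
move=> avoid ab Wa Wb Z.
have [d3|d_lt3] := leqP 3 (b - a).
  case: avoid; apply: (antipower_long_gaps d3 Wa); rewrite ?subnKC ?(ltnW ab) //.
    by move=> k ?; apply: Z; lia.
  by move=> k ?; apply: Z; lia.
case: a => [|p] in ab Wa Z d_lt3 *; first by split => //; lia.
case: avoid; have [b2|b3] : b = p + 2 \/ b = p + 3 by lia.
- subst b; apply: (antipower_x11000 (p := p)); rewrite ?addn1 //; apply: Z; lia.
- subst b; apply: (antipower_x10100000 (p := p)); rewrite ?addn1 //; apply: Z; lia.
Qed.

Lemma omega0E k : omega [:: false] k = false.
Proof. by rewrite /omega modn1. Qed.

Lemma omega01E k : omega [:: false; true] k = odd k.
Proof. by rewrite /omega /= modn2; case: (odd k). Qed.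

Lemma prepend_110E k : prepend [:: true; true] (omega [:: false]) k = (k < 2).
Proof. by case: k => [|[|k]] //; rewrite /prepend omega0E. Qed.

Lemma prepend_1010E k :
  prepend [:: true; false; true] (omega [:: false]) k = (k == 0) || (k == 2).
Proof. by case: k => [|[|[|k]]] //; rewrite /prepend omega0E. Qed.

Lemma prepend_singleE i k :
  prepend (nseq i false ++ [:: true]) (omega [:: false]) k = (k == i).
Proof.
rewrite /prepend omega0E size_cat size_nseq addn1 ltnS nth_cat size_nseq.
by case: ltngtP => [ki|//|->]; rewrite ?nth_nseq ?ki ?subnn.
Qed.

Lemma eventually_zero_listed w : ~ contains_3antipower w -> eventually_zero w ->
  listed_word w.
Proof.
move=> avoid [N zN].
case: (classic (exists2 k, k < N & w k)) => [/last_one_below [b [bN Wb Zb]] | none].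
  have after_b k : b < k -> w k = false.
    by move=> bk; case: (ltnP k N) => [kN | /zN //]; apply: Zb; rewrite bk.
  case: (classic (exists2 k, k < b & w k)) => [/last_one_below [a [ab Wa Za]] | single].
    have [|a0 [b1|b2]] := last_two_ones avoid ab Wa Wb; subst.
    - move=> k ak; case: ltngtP => [kb|bk|->] // _; last exact: after_b.
      by apply: Za; rewrite ak.
    - right; right; left => k; rewrite prepend_110E.
      by case: k => [|[|k]] //; exact: after_b.
    - do 3 right; left => k; rewrite prepend_1010E.
      by case: k => [|[|[|k]]] //; [apply: Za | exact: after_b].
  do 4 right; exists b => k; rewrite prepend_singleE.
  case: ltngtP => [kb|bk|->] //; last exact: after_b.
  by apply: negbTE; apply/negP => Wk; apply: single; exists k.
left => k; rewrite omega0E; apply: negbTE; apply/negP => Wk.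
by case: (ltnP k N) => [kN | /zN]; [apply: none; exists k | rewrite Wk].
Qed.

Lemma not_contains_3antipower (w : infword) :
  (forall i m, ~~ antipower_at w i m) -> ~ contains_3antipower w.
Proof.
by move=> none /contains_3antipowerP [i [m anti]]; move: (none i m); rewrite anti.
Qed.

Lemma not_antipower_at (w : infword) i m :
  [\/ forall j, j < m -> w (i + j) = w (i + m + j),
      forall j, j < m -> w (i + j) = w (i + m + m + j) |
      forall j, j < m -> w (i + m + j) = w (i + m + m + j)] -> ~~ antipower_at w i m.
Proof. by rewrite /antipower_at; case=> /factor_eq ->; rewrite eqxx ?andbF. Qed.

Lemma avoid_zero : ~ contains_3antipower (fun _ => false).
Proof.
by apply: not_contains_3antipower => i m; apply: not_antipower_at; apply: Or31.
Qed.

Lemma avoid_odd : ~ contains_3antipower odd.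
Proof.
apply: not_contains_3antipower => i m; apply: not_antipower_at; apply: Or32 => j _.
by rewrite (_ : i + m + m + j = i + j + m.*2) ?oddD ?odd_double ?addbF //; lia.
Qed.

Lemma avoid_single (i0 : nat) : ~ contains_3antipower (fun k => k == i0).
Proof.
apply: not_contains_3antipower => i m; apply: not_antipower_at.
have [i0_lt|i0_ge] := ltnP i0 (i + m).
  by apply: Or33 => j jm; do 2 (case: eqP => //; try lia).
have [i0_lt'|i0_ge'] := ltnP i0 (i + m + m).
  by apply: Or32 => j jm; do 2 (case: eqP => //; try lia).
by apply: Or31 => j jm; do 2 (case: eqP => //; try lia).
Qed.

Lemma avoid_supported_below_3 (w : infword) :
  (forall k, 3 <= k -> w k = false) ->
  ~~ antipower_at w 0 1 -> ~~ antipower_at w 1 1 -> ~~ antipower_at w 0 2 ->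
  ~ contains_3antipower w.
Proof.
move=> Z a01 a11 a02; apply: not_contains_3antipower => i m.
have [late|] := leqP 3 (i + m).
  by apply: not_antipower_at; apply: Or33 => j _; rewrite !Z //; lia.
case: m => [_|m im]; first by apply: not_antipower_at; apply: Or31.
have [[-> ->]|[[-> ->]|[-> ->]]] :
  [/\ i = 0 & m = 0] \/ [/\ i = 1 & m = 0] \/ [/\ i = 0 & m = 1] by lia.
all: by [].
Qed.

Lemma listed_word_avoid w : listed_word w -> ~ contains_3antipower w.
Proof.
have avoid_eq v : ~ contains_3antipower v -> w =1 v -> ~ contains_3antipower w.
  by move=> avoid wv /(contains_3antipower_eq wv).
case=> [|[|[|[|[i]]]]] wv.
- by apply: (avoid_eq _ avoid_zero) => k; rewrite wv omega0E.
- by apply: (avoid_eq _ avoid_odd) => k; rewrite wv omega01E.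
- apply: (avoid_eq (fun k => k < 2)) => [|k]; last by rewrite wv prepend_110E.
  by apply: avoid_supported_below_3 => // -[|[|[|k]]].
- apply: (avoid_eq (fun k => (k == 0) || (k == 2))); last first.
    by move=> k; rewrite wv prepend_1010E.
  by apply: avoid_supported_below_3 => // -[|[|[|k]]].
- by apply: (avoid_eq _ (@avoid_single i)) => k; rewrite wv prepend_singleE.
Qed.

Theorem corollary6 (w : infword) :
  ~ contains_3antipower w <->
  (listed_word w \/ exists v : infword, listed_word v /\ w =1 compl v).
Proof.
split=> [avoid | [listed | [v [listed wv]]]]; last 2 first.
- exact: listed_word_avoid.
- move=> /(contains_3antipower_eq wv) /contains_3antipower_compl.
  exact: listed_word_avoid.
have [zero|ones] := classic (eventually_zero w).
  by left; apply: eventually_zero_listed.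
have [zero'|zeros] := classic (eventually_zero (compl w)).
  right; exists (compl w); split => [|k]; last by rewrite /compl negbK.
  by apply: eventually_zero_listed => // /contains_3antipower_compl.
have alt := alternating_fromE (alternating_of_avoid avoid
  (not_eventually_zero_ones ones) (not_eventually_zero_ones zeros)).
case W0: (w 0); [right; exists (omega [:: false; true]) | left].
- split=> [|k]; first by right; left.
  by rewrite /compl omega01E -(add0n k) alt W0 addbT.
- by right; left => k; rewrite omega01E -(add0n k) alt W0 addbF.
Qed.
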